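(* Let $k,n$ be integers with $n>2$ and $k\geq 4$. If $c$ is an exact $k$-coloring of $\mathcal{B}_n$ with no rainbow induced copy of $\mathcal{B}_2$, then $k\leq \binom{n}{\lfloor n/2\rfloor}+\binom{n-1}{\lfloor (n-1)/2\rfloor}+\binom{n-2}{\lfloor (n-2)/2\rfloor}+1$.
   Context: $\mathcal{B}_n$ is the Boolean lattice of subsets of $[n]$ under inclusion. An exact $k$-coloring is a surjective map $c:\mathcal{B}_n\to[k]$. A rainbow induced copy of $\mathcal{B}_2$ is four sets $W_1\subsetneq W_2,W_3\subsetneq W_4$ with $W_2,W_3$ incomparable and pairwise distinct colors. *)

From mathcomp Require Import all_boot.
Set Implicit Arguments. Unset Strict Implicit. Unset Printing Implicit Defensive.

(* B_n = subsets of [n] = {set 'I_n}, ordered by inclusion. *)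
Definition exact_coloring (n k : nat) (c : {set 'I_n} -> 'I_k) : Prop :=
  forall i : 'I_k, exists W : {set 'I_n}, c W = i.

Definition rainbow_B2 (n k : nat) (c : {set 'I_n} -> 'I_k)
  (W1 W2 W3 W4 : {set 'I_n}) : Prop :=
  [/\ W1 \proper W2, W1 \proper W3, W2 \proper W4, W3 \proper W4
    & ~~ (W2 \subset W3) /\ ~~ (W3 \subset W2)] /\
  [/\ c W1 != c W2, c W1 != c W3 & c W1 != c W4] /\
  [/\ c W2 != c W3, c W2 != c W4 & c W3 != c W4].

Definition has_rainbow_B2 (n k : nat) (c : {set 'I_n} -> 'I_k) : Prop :=
  exists W1 W2 W3 W4, rainbow_B2 c W1 W2 W3 W4.

(* The colours other than c(∅) and c([n]) are represented by a family S of
   sets on which c is injective.  As c has no rainbow induced B_2, two members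
   of S containing a common smaller member are comparable, and S has no chain
   X1 ⊂ X2 ⊂ X3 ⊂ X4: whatever the colour of X1 ∪ (X4 \ X3), it completes a
   rainbow B_2 with three sets among ∅, X1, ..., X4, [n].  Hence S splits into
   three levels (minimal sets, sets all of whose lower members are minimal, the
   rest), and pairing each X of the j-th level with a member of S that lies
   j - 1 steps below it and with the complement of X yields a Bollobás set-pair
   system in which every pair has total size at most n - j + 1.  Bollobás's
   inequality, proved by deleting a point of the ground set and double
   counting, bounds the j-th level by the central binomial coefficient of
   n - j + 1.  If c(∅) = c([n]) this accounts for k - 1 colours; otherwise the
   k - 2 remaining sets have pairwise distinct sizes (two sets of equal size
   form a rainbow B_2 with ∅ and [n]), so k - 2 <= n - 1. *)

From mathcomp Require Import all_boot all_order all_algebra zify.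

Set Implicit Arguments.
Unset Strict Implicit.
Unset Printing Implicit Defensive.

Import Order.TTheory GRing.Theory Num.Theory.

Lemma leq_bin_succ n m : m < n./2 -> 'C(n, m) <= 'C(n, m.+1).
Proof.
move=> lt_m_half; rewrite -(@leq_pmul2l m.+1) // mul_bin_left leq_mul2r.
by apply/orP; right; move: lt_m_half; rewrite -divn2; lia.
Qed.

Lemma leq_bin_half n m : 'C(n, m) <= 'C(n, n./2).
Proof.
have bin_homo : {in [pred i | i <= n./2] &, {homo binomial n : i j / i <= j}}.
  apply: homo_leq_in => [//|i j l|i j _ /= le_j_half l /andP[_ lt_l_j]|i _ /=].
  - exact: leq_trans.
  - by rewrite inE (leq_trans (ltnW lt_l_j)).
  - by rewrite inE; exact: leq_bin_succ.
have half_in : n./2 \in [pred i | i <= n./2] by rewrite inE.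
have [le_m_half|lt_half_m] := leqP m n./2; first exact: bin_homo.
have [le_m_n|lt_n_m] := leqP m n; last by rewrite bin_small.
have le_half : n - m <= n./2 by move: lt_half_m; rewrite -!divn2; lia.
by rewrite -bin_sub //; apply: bin_homo.
Qed.

Lemma leq_bin_half_mono m n : m <= n -> 'C(m, m./2) <= 'C(n, n./2).
Proof. by move=> le_mn; apply: leq_trans (leq_bin2l _ le_mn) (leq_bin_half _ _). Qed.

Section SetPairSystems.
Local Open Scope ring_scope.

Definition pair_weight (a b : nat) : rat := ('C(a + b, a)%:R)^-1.

Lemma pair_weight_le1 a b : pair_weight a b <= 1.
Proof. by rewrite invf_le1 ?ler1n ?ltr0n ?bin_gt0 ?leq_addr. Qed.

Lemma pair_weight_recr a b :
  pair_weight a b *+ b.+1 = pair_weight a b.+1 *+ (a + b.+1).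
Proof.
have bin_neq0 c : 'C(a + c, a)%:R != 0 :> rat.
  by rewrite pnatr_eq0 -lt0n bin_gt0 leq_addr.
rewrite -[LHS]mulr_natl -[RHS]mulr_natl; apply/eqP.
rewrite eqr_div ?bin_neq0 // -!natrM; apply/eqP; congr _%:R.
by have := mul_bin_down (a + b.+1) a; rewrite addnS /= -addnS addKn mulnC => ->.
Qed.

Lemma pair_weight_ge_half a b s :
  (a + b <= s)%N -> ('C(s, s./2)%:R)^-1 <= pair_weight a b.
Proof.
move=> le_ab_s; rewrite lef_pV2 ?posrE ?ltr0n ?bin_gt0 ?leq_addr //; last first.
  by rewrite -divn2 leq_div.
by rewrite ler_nat (leq_trans (leq_bin_half _ _) (leq_bin_half_mono le_ab_s)).
Qed.

Variables T I : finType.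

Definition set_pair_system (U : {set T}) (P : {set I}) (A B : I -> {set T}) :=
  (forall i, i \in P -> [/\ A i \subset U, B i \subset U & [disjoint A i & B i]]) /\
  (forall i j, i \in P -> j \in P -> i != j -> ~~ [disjoint A i & B j]).

Lemma bollobas_set_pairs_B0 U P A B i :
  set_pair_system U P A B -> i \in P -> B i = set0 ->
  \sum_(j in P) pair_weight #|A j| #|B j| <= 1.
Proof.
move=> [_ cross] iP Bi0; suff -> : P = [set i] by rewrite big_set1 pair_weight_le1.
apply/setP => j; rewrite inE; apply/idP/eqP => [jP|-> //].
apply/eqP/negPn/negP => neq_ji.
by have := cross j i jP iP neq_ji; rewrite Bi0 -setI_eq0 setI0 eqxx.
Qed.

Lemma set_pair_system_delete U P A B x :
  set_pair_system U P A B ->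
  set_pair_system (U :\ x) [set i in P | x \notin A i] A (fun i => B i :\ x).
Proof.
move=> [sub cross]; split=> [i | i j].
  rewrite inE => /andP[iP xAi]; have [AU BU dAB] := sub i iP.
  by rewrite subsetD1 AU xAi setSD // (disjointWr (subD1set _ _) dAB).
rewrite !inE => /andP[iP xAi] /andP[jP _] neq_ij.
have := cross i j iP jP neq_ij; rewrite -!setI_eq0 => /set0Pn[y].
rewrite inE => /andP[yAi yBj]; apply/set0Pn; exists y.
by rewrite !inE yAi yBj andbT; apply: contraNneq xAi => <-.
Qed.

Lemma sum_pair_weight_delete (U A B : {set T}) :
  A \subset U -> B \subset U -> [disjoint A & B] -> B != set0 ->
  \sum_(x in U :\: A) pair_weight #|A| #|B :\ x| = #|U|%:R * pair_weight #|A| #|B|.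
Proof.
move=> AU BU dAB B_neq0.
have BUA : (U :\: A) :&: B = B by apply/setIidPr; rewrite subsetD BU disjoint_sym.
have cardAB : #|A :|: B| = (#|A| + #|B|)%N by rewrite cardsU disjoint_setI0 ?cards0 ?subn0.
have cardUAB : #|(U :\: A) :\: B| = (#|U| - (#|A| + #|B|))%N.
  by rewrite setDDl cardsDS ?cardAB // subUset AU.
have le_AB_U : (#|A| + #|B| <= #|U|)%N by rewrite -cardAB subset_leq_card // subUset AU.
rewrite (big_setID B) /= BUA.
rewrite (eq_bigr (fun=> pair_weight #|A| #|B|.-1)) => [|x xB]; last first.
  by rewrite (cardsD1 x B) xB.
rewrite [X in _ + X](eq_bigr (fun=> pair_weight #|A| #|B|)) => [|x]; last first.
  by rewrite !inE => /andP[/negPf xB _]; rewrite [in RHS](cardsD1 x B) xB.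
rewrite !sumr_const cardUAB mulr_natl.
move: le_AB_U; rewrite -(card_gt0 B) in B_neq0.
case: #|B| B_neq0 => // b _ le_AB_U /=.
by rewrite pair_weight_recr -mulrnDr subnKC.
Qed.

Theorem bollobas_set_pairs U P A B :
  set_pair_system U P A B -> \sum_(i in P) pair_weight #|A i| #|B i| <= 1.
Proof.
have [m cardU] : exists m, #|U| = m by exists #|U|.
elim: m U P B cardU => [|m IH] U P B cardU sys.
  case: (set_0Vmem P) => [-> | [i iP]]; first by rewrite big_set0.
  apply: (bollobas_set_pairs_B0 sys iP); apply/eqP; rewrite -subset0 -(cards0_eq cardU).
  by have [] := sys.1 i iP.
case: (boolP [exists i in P, B i == set0]) => [/exists_inP[i iP /eqP Bi0] | /exists_inPn B_neq0].
  exact: bollobas_set_pairs_B0 sys iP Bi0.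
pose F i x := pair_weight #|A i| #|B i :\ x|.
have sum_delete x : x \in U -> \sum_(i in [set i in P | x \notin A i]) F i x <= 1.
  move=> xU; apply: IH (set_pair_system_delete x sys).
  by move: cardU; rewrite (cardsD1 x) xU => -[].
have double_count : \sum_(i in P) \sum_(x in U :\: A i) F i x =
                    \sum_(x in U) \sum_(i in [set i in P | x \notin A i]) F i x.
  rewrite (exchange_big_dep (mem U)) /= => [|i x _]; last by rewrite inE => /andP[].
  by apply: eq_bigr => x xU; apply: eq_bigl => i; rewrite !inE xU andbT.
have : m.+1%:R * \sum_(i in P) pair_weight #|A i| #|B i| <= m.+1%:R.
  rewrite -cardU mulr_sumr.
  rewrite (eq_bigr (fun i => \sum_(x in U :\: A i) F i x)) => [|i iP]; last first.
    by have [AU BU dAB] := sys.1 i iP; rewrite sum_pair_weight_delete ?B_neq0.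
  by rewrite double_count -sumr_const; apply: ler_sum => x xU; apply: sum_delete.
by rewrite -[X in _ <= X]mulr1 ler_pM2l ?ltr0n.
Qed.

Corollary card_set_pair_system P A B s :
  set_pair_system [set: T] P A B -> (forall i, i \in P -> #|A i| + #|B i| <= s)%N ->
  (#|P| <= 'C(s, s./2))%N.
Proof.
move=> sys le_s; have mid_gt0 : 0 < 'C(s, s./2)%:R :> rat.
  by rewrite ltr0n bin_gt0 -divn2 leq_div.
have : #|P|%:R * ('C(s, s./2)%:R)^-1 <= 1 :> rat.
  apply: le_trans (bollobas_set_pairs sys).
  rewrite mulr_natl -sumr_const; apply: ler_sum => i iP.
  exact: pair_weight_ge_half (le_s i iP).
by rewrite ler_pdivrMr // mul1r ler_nat.
Qed.

End SetPairSystems.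

Lemma pick_in (T : finType) (A : {set T}) x0 : A != set0 -> odflt x0 [pick x in A] \in A.
Proof. by case: pickP => [//|/= A0 /set0Pn[x]]; rewrite A0. Qed.

Lemma card_family_by_witnesses (T : finType) (F : {set {set T}}) (low : {set T} -> {set T}) d :
  (forall X, X \in F -> low X \subset X /\ #|low X| + d <= #|X|) ->
  (forall X Y, X \in F -> Y \in F -> X != Y -> ~~ (low X \subset Y)) ->
  #|F| <= 'C(#|T| - d, (#|T| - d)./2).
Proof.
move=> witness cross; apply: (@card_set_pair_system _ _ F low (fun X => ~: X)).
  split=> [X XF | X Y XF YF neq_XY]; last by rewrite disjoints_subset setCK cross.
  by rewrite !subsetT disjoints_subset setCK; case: (witness X XF).
move=> X XF; have [_ le_low] := witness X XF.
have := cardsC X; have := max_card (mem X); lia.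
Qed.

Section ThreeLevelFamilies.
Variables (T : finType) (S : {set {set T}}).

Definition below (X : {set T}) := [set Y in S | Y \proper X].
Definition below2 (X : {set T}) := \bigcup_(Y in below X) below Y.

Definition level1 := [set X in S | below X == set0].
Definition level2 := [set X in S | (below X != set0) && (below2 X == set0)].
Definition level3 := [set X in S | below2 X != set0].

Lemma card_levels : #|S| <= #|level1| + #|level2| + #|level3|.
Proof.
have cover : S \subset level1 :|: level2 :|: level3.
  by apply/subsetP => X XS; rewrite !inE XS; case: (below X == set0); case: (below2 X == set0).
apply: leq_trans (subset_leq_card cover) _.
by rewrite !cardsU -addnA; lia.
Qed.

Lemma card_level1 : #|level1| <= 'C(#|T|, #|T|./2).
Proof.
rewrite -[#|T|]subn0; apply: (card_family_by_witnesses (low := id)) => [X _|X Y].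
  by rewrite subxx addn0.
rewrite !inE => /andP[XS _] /andP[_ /eqP belowY0] neqXY; apply/negP => leXY.
have : X \in below Y by rewrite inE XS; rewrite properEneq neqXY.
by rewrite belowY0 inE.
Qed.

Hypothesis chain4_free : forall X1 X2 X3 X4, X1 \in S -> X2 \in S -> X3 \in S -> X4 \in S ->
  X1 \proper X2 -> X2 \proper X3 -> X3 \proper X4 -> False.
Hypothesis above_comparable : forall X Y Z, X \in S -> Y \in S -> Z \in S ->
  X \proper Y -> X \proper Z -> (Y \subset Z) || (Z \subset Y).

Lemma below2P Z X : reflect (exists2 Y, Y \in below X & Z \in below Y) (Z \in below2 X).
Proof. exact: bigcupP. Qed.

Lemma proper_comparable X Y Z : X \in S -> Y \in S -> Z \in S ->
  X \proper Y -> X \subset Z -> Y != Z -> (Y \proper Z) || (Z \proper Y).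
Proof.
move=> XS YS ZS ltXY leXZ neqYZ; rewrite !properEneq neqYZ eq_sym neqYZ /=.
have [<-|neqXZ] := eqVneq X Z; first by rewrite (proper_sub ltXY) orbT.
have ltXZ : X \proper Z by rewrite properEneq neqXZ.
exact: above_comparable ltXY ltXZ.
Qed.

Definition pick_below (X : {set T}) := odflt X [pick Y in below X].
Definition pick_below2 (X : {set T}) := odflt X [pick Y in below2 X].

Lemma card_level2 : #|level2| <= 'C(#|T|.-1, #|T|.-1./2).
Proof.
rewrite -subn1; apply: (card_family_by_witnesses (low := pick_below)).
  move=> X; rewrite inE => /andP[_ /andP[/(pick_in X)]].
  rewrite inE -/(pick_below X) => /andP[_ ltLX] _; split; first exact: proper_sub.
  by have := proper_card ltLX; lia.
move=> X X'; rewrite !inE => /andP[XS /andP[/(pick_in X) LX /eqP below2X0]].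
move=> /andP[X'S /andP[/set0Pn[Y' Y'X'] /eqP below2X'0]] neqXX'.
move: (LX); rewrite inE -/(pick_below X) => /andP[LS ltLX]; apply/negP => leLX'.
case/orP: (proper_comparable LS XS X'S ltLX leLX' neqXX') => [ltXX' | ltX'X].
  have : pick_below X \in below2 X' by apply/below2P; exists X; rewrite // inE XS.
  by rewrite below2X'0 inE.
have : Y' \in below2 X by apply/below2P; exists X'; rewrite // inE X'S.
by rewrite below2X0 inE.
Qed.

Lemma card_level3 : #|level3| <= 'C(#|T|.-2, #|T|.-2./2).
Proof.
rewrite -subn2; apply: (card_family_by_witnesses (low := pick_below2)).
  move=> X; rewrite inE => /andP[_ /(pick_in X) /below2P[Y]].
  rewrite !inE -/(pick_below2 X) => /andP[_ ltYX] /andP[_ ltLY].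
  split; first exact: proper_sub (proper_trans ltLY ltYX).
  by have := proper_card ltLY; have := proper_card ltYX; lia.
move=> X X'; rewrite !inE => /andP[XS /(pick_in X) /below2P[Y]].
rewrite !inE -/(pick_below2 X) => /andP[YS ltYX] /andP[LS ltLY].
move=> /andP[X'S /set0Pn[Z' /below2P[Y']]].
rewrite !inE => /andP[Y'S ltY'X'] /andP[Z'S ltZ'Y'] neqXX'; apply/negP => leLX'.
have ltLX := proper_trans ltLY ltYX.
case/orP: (proper_comparable LS XS X'S ltLX leLX' neqXX') => [ltXX' | ltX'X].
  exact: chain4_free LS YS XS X'S ltLY ltYX ltXX'.
exact: chain4_free Z'S Y'S X'S XS ltZ'Y' ltY'X' ltX'X.
Qed.

Theorem card_three_level_family :
  #|S| <= 'C(#|T|, #|T|./2) + 'C(#|T|.-1, #|T|.-1./2) + 'C(#|T|.-2, #|T|.-2./2).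
Proof.
apply: leq_trans card_levels _.
by rewrite !leq_add ?card_level1 ?card_level2 ?card_level3.
Qed.

End ThreeLevelFamilies.

Lemma proper_eqF (T : finType) (X Y : {set T}) :
  X \proper Y -> ((X == Y) = false) * ((Y == X) = false).
Proof. by move/proper_neq/negPf => neqXY; rewrite [Y == X]eq_sym neqXY. Qed.

Lemma chain4_splitter (T : finType) (X1 X2 X3 X4 : {set T}) :
  X1 \proper X2 -> X2 \proper X3 -> X3 \proper X4 ->
  [/\ X1 \proper X1 :|: (X4 :\: X3), X1 :|: (X4 :\: X3) \proper X4,
      ~~ (X1 :|: (X4 :\: X3) \subset X3) & ~~ (X2 \subset X1 :|: (X4 :\: X3))].
Proof.
move=> /properP[le12 [z z2 z1]] /properP[le23 _] /properP[le34 [y y4 y3]].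
have le13 := subset_trans le12 le23.
have yW : y \in X1 :|: (X4 :\: X3) by rewrite !inE y4 y3 orbT.
have zW : z \notin X1 :|: (X4 :\: X3) by rewrite !inE (negPf z1) (subsetP le23 z z2).
split.
- apply/properP; split; first exact: subsetUl.
  by exists y => //; apply: contra y3; apply: (subsetP le13).
- apply/properP; split; first by rewrite subUset (subset_trans le13 le34) subsetDl.
  by exists z; [exact: subsetP le34 z (subsetP le23 z z2) | ].
- by apply/subsetPn; exists y.
- by apply/subsetPn; exists z.
Qed.

Section RainbowFreeColourings.
Variables (n k : nat) (c : {set 'I_n} -> 'I_k).
Hypothesis rainbow_free : ~ has_rainbow_B2 c.

Lemma induced_B2_not_rainbow (W1 W2 W3 W4 : {set 'I_n}) :
  W1 \proper W2 -> W1 \proper W3 -> W2 \proper W4 -> W3 \proper W4 ->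
  ~~ (W2 \subset W3) -> ~~ (W3 \subset W2) -> ~~ uniq [:: c W1; c W2; c W3; c W4].
Proof.
move=> lt12 lt13 lt24 lt34 inc23 inc32; apply/negP.
rewrite /= !inE !negb_or => /and4P[/and3P[ne12 ne13 ne14] /andP[ne23 ne24] ne34 _].
by apply: rainbow_free; exists W1, W2, W3, W4.
Qed.

Variable S : {set {set 'I_n}}.
Hypothesis colour_inj : {in S &, injective c}.
Hypothesis colour_inner : forall X, X \in S -> c X \notin [set c set0; c setT].

Lemma colour_eq X Y : X \in S -> Y \in S -> (c X == c Y) = (X == Y).
Proof. exact: inj_in_eq. Qed.

Lemma colour_neq0 X : X \in S -> (c set0 == c X) = false.
Proof. by move/colour_inner; rewrite !inE negb_or eq_sym => /andP[/negPf]. Qed.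

Lemma colour_neqT X : X \in S -> (c X == c setT) = false.
Proof. by move/colour_inner; rewrite !inE negb_or => /andP[_ /negPf]. Qed.

Lemma rainbow_free_above_comparable X Y Z : X \in S -> Y \in S -> Z \in S ->
  X \proper Y -> X \proper Z -> (Y \subset Z) || (Z \subset Y).
Proof.
move=> XS YS ZS ltXY ltXZ; apply/negPn/negP; rewrite negb_or => /andP[incYZ incZY].
have ltYT : Y \proper setT by rewrite properT; apply: contraNneq incZY => ->; apply: subsetT.
have ltZT : Z \proper setT by rewrite properT; apply: contraNneq incYZ => ->; apply: subsetT.
move/negP: (induced_B2_not_rainbow ltXY ltXZ ltYT ltZT incYZ incZY); apply.
rewrite /= !inE !negb_or !colour_neqT // !colour_eq //.
rewrite (proper_neq ltXY) (proper_neq ltXZ) /= !andbT.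
by apply: contraNneq incYZ => ->.
Qed.

Lemma rainbow_free_chain4 X1 X2 X3 X4 : X1 \in S -> X2 \in S -> X3 \in S -> X4 \in S ->
  X1 \proper X2 -> X2 \proper X3 -> X3 \proper X4 -> False.
Proof.
move=> S1 S2 S3 S4 lt12 lt23 lt34.
have [lt1W ltW4 incW3 inc2W] := chain4_splitter lt12 lt23 lt34.
set W := X1 :|: _ in lt1W ltW4 incW3 inc2W.
have lt13 := proper_trans lt12 lt23; have lt24 := proper_trans lt23 lt34.
have lt14 := proper_trans lt13 lt34.
have incW2 : ~~ (W \subset X2) by apply: contra incW3 => /subset_trans; apply; exact: proper_sub.
have inc3W : ~~ (X3 \subset W) by apply: contra inc2W; apply: subset_trans; exact: proper_sub.
have chainF := (proper_eqF lt12, proper_eqF lt13, proper_eqF lt14,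
                proper_eqF lt23, proper_eqF lt24, proper_eqF lt34).
have [cW1 | neW1] := eqVneq (c X1) (c W).
  have lt02 : set0 \proper X2 by exact: sub_proper_trans (sub0set X1) lt12.
  have lt0W : set0 \proper W by exact: sub_proper_trans (sub0set X1) lt1W.
  move/negP: (induced_B2_not_rainbow lt02 lt0W lt24 ltW4 inc2W incW2); apply.
  by rewrite -cW1 /= !inE !negb_or !colour_neq0 // !colour_eq // !chainF.
have [cW4 | neW4] := eqVneq (c W) (c X4).
  have lt2T := proper_sub_trans lt24 (subsetT X4).
  have ltWT := proper_sub_trans ltW4 (subsetT X4).
  move/negP: (induced_B2_not_rainbow lt12 lt1W lt2T ltWT inc2W incW2); apply.
  by rewrite cW4 /= !inE !negb_or !colour_neqT // !colour_eq // !chainF.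
have [cW2 | neW2] := eqVneq (c X2) (c W).
  move/negP: (induced_B2_not_rainbow lt13 lt1W lt34 ltW4 inc3W incW3); apply.
  by rewrite -cW2 /= !inE !negb_or !colour_eq // !chainF.
move/negP: (induced_B2_not_rainbow lt12 lt1W lt24 ltW4 inc2W incW2); apply.
by rewrite /= !inE !negb_or (colour_eq S1 S2) (colour_eq S1 S4) (colour_eq S2 S4) !chainF
  (negPf neW1) (negPf neW2) (negPf neW4).
Qed.

Lemma rainbow_free_nontrivial X : X \in S -> set0 \proper X /\ X \proper setT.
Proof.
move=> XS; rewrite proper0 properT; split.
  by apply: contraFneq (colour_neq0 XS) => ->.
by apply: contraFneq (colour_neqT XS) => ->.
Qed.

Lemma rainbow_free_card_inj :
  c set0 != c setT -> {in S &, injective (fun X : {set 'I_n} => #|X|)}.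
Proof.
move=> c0T X Y XS YS eq_card; apply/eqP/negPn/negP => neqXY.
have [lt0X ltXT] := rainbow_free_nontrivial XS.
have [lt0Y ltYT] := rainbow_free_nontrivial YS.
have incXY : ~~ (X \subset Y).
  by apply: contra neqXY => leXY; rewrite eqEcard leXY eq_card leqnn.
have incYX : ~~ (Y \subset X).
  by apply: contra neqXY => leYX; rewrite eq_sym eqEcard leYX eq_card leqnn.
move/negP: (induced_B2_not_rainbow lt0X lt0Y ltXT ltYT incXY incYX); apply.
by rewrite /= !inE !negb_or (negPf c0T) !colour_neq0 // !colour_neqT // (colour_eq XS YS) neqXY.
Qed.

Lemma rainbow_free_card_le : c set0 != c setT -> #|S| <= n.-1.
Proof.
move=> c0T; rewrite cardE -(size_map (fun X : {set 'I_n} => #|X|)) -[n.-1](size_iota 1).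
apply: uniq_leq_size => [|_ /mapP[X XS ->]].
  rewrite map_inj_in_uniq ?enum_uniq // => X Y.
  by rewrite !mem_enum; apply: rainbow_free_card_inj.
rewrite mem_enum in XS; have [/proper_card lt0X /proper_card ltXT] := rainbow_free_nontrivial XS.
by rewrite mem_iota; move: lt0X ltXT; rewrite cards0 cardsT card_ord; lia.
Qed.

End RainbowFreeColourings.

Lemma exact_coloring_transversal n k (c : {set 'I_n} -> 'I_k) (O : {set 'I_k}) :
  exact_coloring c -> exists S : {set {set 'I_n}}, {in S &, injective c} /\ c @: S = O.
Proof.
move=> onto; pose rep i := odflt set0 [pick W | c W == i].
have c_rep i : c (rep i) = i.
  rewrite /rep; case: pickP => [W /eqP // | no_W].
  by have [W cW] := onto i; have := no_W W; rewrite cW eqxx.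
exists (rep @: O); split; first by move=> _ _ /imsetP[i _ ->] /imsetP[j _ ->]; rewrite !c_rep => ->.
by rewrite -imset_comp (eq_imset _ c_rep) imset_id.
Qed.

Theorem proposition2p14 (n k : nat) (c : {set 'I_n} -> 'I_k) :
  2 < n -> 4 <= k ->
  exact_coloring c -> ~ has_rainbow_B2 c ->
  k <= 'C(n, n./2) + 'C(n.-1, n.-1./2) + 'C(n.-2, n.-2./2) + 1.
Proof.
(* The bound holds for all n and k. *)
move=> _ _ onto rainbow_free.
have [S [c_inj cS]] := exact_coloring_transversal (~: [set c set0; c setT]) onto.
have inner X : X \in S -> c X \notin [set c set0; c setT].
  by move=> XS; rewrite -in_setC -cS imset_f.
have k_eq : k = #|S| + (c set0 != c setT).+1.
  have := cardsC [set c set0; c setT]; rewrite -cS (card_in_imset c_inj) cards2 card_ord.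
  by move=> e; rewrite addnC; exact: esym e.
case: (eqVneq (c set0) (c setT)) k_eq => [c0T | c0T] ->.
  have := card_three_level_family (rainbow_free_chain4 rainbow_free c_inj inner)
    (rainbow_free_above_comparable rainbow_free c_inj inner).
  rewrite card_ord /=; lia.
have := rainbow_free_card_le rainbow_free c_inj inner c0T.
have := leq_bin_half n 1; have : 0 < 'C(n.-1, n.-1./2) by rewrite bin_gt0 -divn2 leq_div.
rewrite bin1; lia.
Qed.
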